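(* Let $(X,\mathcal{X},\mu)$ be a probability space, let $(Y,\mathcal{Y})$ be a measurable space, and let $f\colon X\to Y$ be a measurable function with output probability measure $\mu_f\colon\mathcal{Y}\to[0,1]$, $\mu_f=\mu\circ\mathit{pre}_f$. Let $\mathit{img}^\sharp_f\colon\wp(X)\to\wp(Y)$ be a function with $\mathit{img}_f(S)\subseteq\mathit{img}^\sharp_f(S)$ for all $S\subseteq X$, let $T$ be a finite partition of $X$, and let $\uparrow\colon\wp(X)\to\mathcal{X}$ be a monotone abstraction. For $A\subseteq Y$ define $$\mathit{pre}'^\sharp_f[T](A)\;=\;\uparrow\Big(\bigcup\{t\in T\mid \mathit{img}^\sharp_f(t)\cap A\neq\emptyset\}\Big),\qquad \mathit{pre}'^\flat_f[T](A)\;=\;X\setminus \mathit{pre}'^\sharp_f[T](Y\setminus A),$$ and $\mu^\sharp_f=\mu\circ\mathit{pre}'^\sharp_f[T]$, $\mu^\flat_f=\mu\circ\mathit{pre}'^\flat_f[T]$. Then for all $A\in\mathcal{Y}$: (i) $\mu^\flat_f(A)\le\mu_f(A)\le\mu^\sharp_f(A)$; (ii) $\mu^\flat_f(A)=1-\mu^\sharp_f(Y\setminus A)$; and (iii) $\mu^\flat_f$ and $\mu^\sharp_f$ are monotone (i.e. $A\subseteq B$ implies $\mu^\flat_f(A)\le\mu^\flat_f(B)$ and $\mu^\sharp_f(A)\le\mu^\sharp_f(B)$).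
   Context: For a function $f\colon X\to Y$: the pre-image function is $\mathit{pre}_f(B)=\{x\in X\mid f(x)\in B\}$ for $B\subseteq Y$, and the image function is $\mathit{img}_f(S)=\{f(x)\mid x\in S\}$ for $S\subseteq X$. $f$ is measurable from $(X,\mathcal{X})$ to $(Y,\mathcal{Y})$ if $\mathit{pre}_f(B)\in\mathcal{X}$ for every $B\in\mathcal{Y}$. A partition of $X$ is a set of nonempty pairwise disjoint subsets of $X$ whose union is $X$. An abstraction is a function $\uparrow\colon\wp(X)\to\mathcal{X}$ with $S\subseteq\,\uparrow(S)$ for all $S\subseteq X$; it is monotone if $S\subseteq S'$ implies $\uparrow(S)\subseteq\,\uparrow(S')$. *)

From HB Require Import structures.
From mathcomp Require Import all_boot all_order all_algebra.
From mathcomp Require Import all_classical all_reals all_analysis.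
Set Implicit Arguments. Unset Strict Implicit. Unset Printing Implicit Defensive.
Import Order.TTheory GRing.Theory Num.Theory.
Local Open Scope classical_set_scope.
Local Open Scope ring_scope.

Definition is_partition {X : Type} (T : set (set X)) : Prop :=
  [/\ (forall t, T t -> t !=set0),
      (forall t t', T t -> T t' -> t `&` t' !=set0 -> t = t') &
      \bigcup_(t in T) t = setT].

Definition is_finite_partition {X : Type} (T : set (set X)) : Prop :=
  finite_set T /\ is_partition T.

Definition is_abstraction {d} {X : measurableType d} (up : set X -> set X) : Prop :=
  (forall S, measurable (up S)) /\ (forall S, S `<=` up S).

Definition monotone_abstraction {d} {X : measurableType d} (up : set X -> set X) : Prop :=
  is_abstraction up /\ (forall S S', S `<=` S' -> up S `<=` up S').

Definition pre_sharp {X Y : Type} (img_sharp : set X -> set Y)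
  (T : set (set X)) (up : set X -> set X) (A : set Y) : set X :=
  up (\bigcup_(t in [set t | T t /\ img_sharp t `&` A !=set0]) t).

Definition pre_flat {X Y : Type} (img_sharp : set X -> set Y)
  (T : set (set X)) (up : set X -> set X) (A : set Y) : set X :=
  ~` pre_sharp img_sharp T up (~` A).

From HB Require Import structures.
From mathcomp Require Import all_boot all_order all_algebra.
From mathcomp Require Import all_classical all_reals all_analysis.
Set Implicit Arguments. Unset Strict Implicit. Unset Printing Implicit Defensive.
Import Order.TTheory GRing.Theory Num.Theory.
Local Open Scope classical_set_scope.
Local Open Scope ring_scope.

(* Every x lies in some block t of T, and f x is in img_sharp t; so whenever
   f x is in A, the block t is collected by pre_sharp A.  Hence the preimage
   of A sits inside pre_sharp A, and dually pre_flat A inside the preimage.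
   The measure bounds then follow by monotonicity of mu, and the duality (ii)
   is the complement rule of a probability. *)

Section PreSharpSets.
Variables (X Y : Type) (img_sharp : set X -> set Y).
Variables (T : set (set X)) (up : set X -> set X).

Lemma pre_sharpS (A B : set Y) :
  (forall S S', S `<=` S' -> up S `<=` up S') -> A `<=` B ->
  pre_sharp img_sharp T up A `<=` pre_sharp img_sharp T up B.
Proof.
move=> upS AB; apply: upS => x [t [Tt [y [yt yA]]] tx].
by exists t => //; split => //; exists y; split => //; apply: AB.
Qed.

Lemma pre_flatS (A B : set Y) :
  (forall S S', S `<=` S' -> up S `<=` up S') -> A `<=` B ->
  pre_flat img_sharp T up A `<=` pre_flat img_sharp T up B.
Proof.
move=> upS AB; apply: subsetC; apply: pre_sharpS => //.
exact: subsetC.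
Qed.

Variable f : X -> Y.
Hypothesis img_sub : forall S : set X, f @` S `<=` img_sharp S.
Hypothesis T_cover : \bigcup_(t in T) t = setT.
Hypothesis up_ext : forall S : set X, S `<=` up S.

Lemma preimage_sub_pre_sharp (A : set Y) :
  f @^-1` A `<=` pre_sharp img_sharp T up A.
Proof.
move=> x fxA; apply: up_ext.
have [t Tt tx] : (\bigcup_(t in T) t) x by rewrite T_cover.
by exists t => //; split => //; exists (f x); split => //; apply: img_sub; exists x.
Qed.

Lemma pre_flat_sub_preimage (A : set Y) :
  pre_flat img_sharp T up A `<=` f @^-1` A.
Proof.
move=> x nx; apply: contrapT => fxNA; apply: nx.
exact: preimage_sub_pre_sharp.
Qed.

End PreSharpSets.

Section PreSharpMeasurable.
Context d (X : measurableType d) (Y : Type) (img_sharp : set X -> set Y).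
Variables (T : set (set X)) (up : set X -> set X).
Hypothesis up_meas : forall S : set X, measurable (up S).

Lemma measurable_pre_sharp (A : set Y) :
  measurable (pre_sharp img_sharp T up A).
Proof. exact: up_meas. Qed.

Lemma measurable_pre_flat (A : set Y) :
  measurable (pre_flat img_sharp T up A).
Proof. exact/measurableC/measurable_pre_sharp. Qed.

End PreSharpMeasurable.

Theorem theorem3 (R : realType) (d : measure_display) (X : measurableType d)
  (mu : probability X R) (d' : measure_display) (Y : measurableType d')
  (f : X -> Y) (mf : measurable_fun setT f)
  (img_sharp : set X -> set Y)
  (himg : forall S : set X, f @` S `<=` img_sharp S)
  (T : set (set X)) (hT : is_finite_partition T)
  (up : set X -> set X) (hup : monotone_abstraction up) :
  let mu_f := fun A : set Y => mu (f @^-1` A) in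
  let mu_sharp := fun A : set Y => mu (pre_sharp img_sharp T up A) in
  let mu_flat := fun A : set Y => mu (pre_flat img_sharp T up A) in
  (forall A : set Y, measurable A ->
     (mu_flat A <= mu_f A)%E /\ (mu_f A <= mu_sharp A)%E) /\
  (forall A : set Y, measurable A ->
     mu_flat A = (1 - mu_sharp (~` A))%E) /\
  (forall A B : set Y, measurable A -> measurable B -> A `<=` B ->
     (mu_flat A <= mu_flat B)%E /\ (mu_sharp A <= mu_sharp B)%E).
Proof.
move=> mu_f mu_sharp mu_flat.
have [_ [_ _ T_cover]] := hT.
have [[up_meas up_ext] upS] := hup.
have mflat A := mem_set (measurable_pre_flat img_sharp T up_meas A).
have msharp A := mem_set (measurable_pre_sharp img_sharp T up_meas A).
have mpre A : measurable A -> f @^-1` A \in measurable.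
  by move=> mA; rewrite inE -[f @^-1` A]setTI; exact: mf.
split; [|split].
- move=> A mA; split; apply: le_measure => //; [exact: mpre| |exact: mpre|].
  + exact: pre_flat_sub_preimage.
  + exact: preimage_sub_pre_sharp.
- move=> A _; rewrite /mu_flat /pre_flat probability_setC //.
  exact: measurable_pre_sharp.
- move=> A B _ _ AB; split; apply: le_measure => //.
  + exact: pre_flatS.
  + exact: pre_sharpS.
Qed.
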